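(* Assume the standing hypotheses described in the context. For any $y\in B(x_0,R)$, \[-f(\|y-x_0\|)\le\|F'(x_0)^{-1}F(y)\|\le f(\|y-x_0\|)+2\|y-x_0\|.\]
   Context: Standing hypotheses: $\mathbb X,\mathbb Y$ are Banach spaces; $B(x,r)$ is the open ball. $R\in\mathbb R$, $C\subseteq\mathbb X$, $F:C\to\mathbb Y$ is continuous and continuously differentiable on $\mathrm{int}(C)$, $x_0\in\mathrm{int}(C)$ with $F'(x_0)$ non-singular, $f:[0,R)\to\mathbb R$ is continuously differentiable, $B(x_0,R)\subseteq C$, $\|F'(x_0)^{-1}[F'(y)-F'(x)]\|\le f'(\|y-x\|+\|x-x_0\|)-f'(\|x-x_0\|)$ for all $x,y\in B(x_0,R)$ with $\|x-x_0\|+\|y-x\|<R$, $\|F'(x_0)^{-1}F(x_0)\|\le f(0)$, and (h1) $f(0)>0$, $f'(0)=-1$; (h2) $f'$ is strictly increasing and convex; (h3) $f(t)<0$ for some $t\in(0,R)$. *)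

From HB Require Import structures.
From mathcomp Require Import all_boot all_order all_algebra.
From mathcomp Require Import all_classical all_reals all_analysis.
Set Implicit Arguments. Unset Strict Implicit. Unset Printing Implicit Defensive.
Import Order.TTheory GRing.Theory Num.Theory.
Import numFieldNormedType.Exports.
Local Open Scope classical_set_scope.
Local Open Scope ring_scope.

Definition opnorm {R : realType} {X Y : normedModType R} (L : X -> Y) : R :=
  sup [set `|L x| | x in [set x : X | `|x| <= 1]].

Definition cont_diff_on {R : realType} {X Y : normedModType R}
  (F : X -> Y) (A : set X) : Prop :=
  forall x, A x -> differentiable F x /\
    (fun y => opnorm (fun v => 'd F y v - 'd F x v)) @ x --> (0 : R).

From HB Require Import structures.
From mathcomp Require Import all_boot all_order all_algebra.
From mathcomp Require Import all_classical all_reals all_analysis.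
From mathcomp Require Import ring lra.
Import Order.TTheory GRing.Theory Num.Theory.
Import numFieldNormedType.Exports.
Local Open Scope classical_set_scope.
Local Open Scope ring_scope.
Set Implicit Arguments. Unset Strict Implicit.

(* Along the segment x s = x0 + s (y - x0), with t = |y - x0|, compare
   phi s = F'(x0)^-1 F(x s) - s (y - x0) with psi s = f (s t) + s t.  The
   right derivative of phi at s is F'(x0)^-1 (F'(x s) - F'(x0)) (y - x0), of
   norm at most (f'(s t) - f'(0)) t by the majorant condition, and f lies above
   its tangents since f' increases; so the increments of phi are dominated to
   first order by those of psi.  A mean value inequality, proved by continuous
   induction on [0, 1], gives
   |F'(x0)^-1 F(y) - F'(x0)^-1 F(x0) - (y - x0)| <= f t - f 0 + t,
   and both bounds follow by the triangle inequality from
   |F'(x0)^-1 F(x0)| <= f 0. *)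

Section MeanValueInequality.
Variables (R : realType) (X : normedModType R) (phi : R -> X) (psi : R -> R).
Hypothesis psi_nondecreasing : {in `[0, 1] &, {homo psi : a b / a <= b}}.
Hypothesis phi_left_cont : forall s, 0 < s <= 1 -> phi u @[u --> s^'-] --> phi s.
Hypothesis phi_right_deriv_le : forall s, 0 <= s < 1 -> forall e, 0 < e ->
  \forall u \near s^'+, `|phi u - phi s| <= psi u - psi s + e * (u - s).

Section Slack.
Variables (e : R) (e_gt0 : 0 < e).

Let good u := `|phi u - phi 0| <= psi u - psi 0 + e * u.
Let A := [set s | 0 <= s <= 1 /\ forall u, 0 <= u <= s -> good u].
Let c := sup A.

Let good0 : good 0.
Proof. by rewrite /good !subrr normr0 mulr0 addr0. Qed.

Let A0 : A 0.
Proof.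
split=> [|u]; first by rewrite lexx ler01.
by rewrite -eq_le => /eqP <-; exact: good0.
Qed.

Let A_has_sup : has_sup A.
Proof. by split; [exists 0 | exists 1 => s [/andP[_ ]]]. Qed.

Let sup_ge0 : 0 <= c.
Proof. exact: sup_upper_bound. Qed.

Let sup_le1 : c <= 1.
Proof. by apply: ge_sup; [exists 0 | move=> s [/andP[_ ]]]. Qed.

Let good_lt_sup u : 0 <= u < c -> good u.
Proof.
move=> /andP[u0 uc].
have cu_gt0 : 0 < c - u by rewrite subr_gt0.
have [s [_ good_s] us] := sup_adherent cu_gt0 A_has_sup.
by apply: good_s; rewrite u0 /=; move: us; rewrite opprB addrC subrK => /ltW.
Qed.

Let good_sup : good c.
Proof.
have [->|c_neq0] := eqVneq c 0; first exact: good0.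
have c_gt0 : 0 < c by rewrite lt_def c_neq0 sup_ge0.
apply/ler_addgt0Pr => eta eta_gt0.
have c01 : 0 < c <= 1 by rewrite c_gt0 sup_le1.
have := phi_left_cont c01; move/cvgrPdist_le => /(_ _ eta_gt0) near_c.
near c^'- => u.
have u_gt0 : 0 < u by near: u; exact: nbhs_left_gt.
have u_lt_c : u < c by near: u; exact: nbhs_left_lt.
have phi_cu : `|phi c - phi u| <= eta by near: u; exact: near_c.
have good_u : good u by apply: good_lt_sup; rewrite ltW.
have psi_uc : psi u <= psi c.
  by apply: psi_nondecreasing; rewrite ?in_itv /=; try (apply/andP; split); lra.
have := ler_normD (phi c - phi u) (phi u - phi 0); rewrite addrA subrK.
have : e * u <= e * c by rewrite ler_pM2l // ltW.
rewrite /good in good_u *; lra.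
Unshelve. all: by end_near.
Qed.

Let sup_eq1 : c = 1.
Proof.
apply/eqP; rewrite eq_le sup_le1 /= leNgt; apply/negP => c_lt1.
have c01 : 0 <= c < 1 by rewrite sup_ge0.
have right_good : \forall u \near c^'+, good u.
  near=> u.
  have : `|phi u - phi c| <= psi u - psi c + e * (u - c).
    by near: u; apply: phi_right_deriv_le.
  have := ler_normD (phi u - phi c) (phi c - phi 0); rewrite addrA subrK.
  have := good_sup; rewrite /good mulrBr; lra.
move: right_good; rewrite near_withinE => /nbhs_ballP [d /= d_gt0 good_d].
pose s := Num.min (c + d / 2) 1.
have c_lt_s : c < s by rewrite lt_min; apply/andP; split; lra.
have s_le : s <= c + d / 2 by rewrite ge_min lexx.
have s_le1 : s <= 1 by rewrite ge_min lexx orbT.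
suff /(sup_upper_bound A_has_sup) : A s by rewrite -/c; lra.
split=> [|u /andP[u0 us]]; first by apply/andP; split; lra.
have [uc|cu] := ltP c u.
  apply: good_d => //; rewrite /ball /= distrC gtr0_norm ?subr_gt0 //.
  by move: us s_le; clearbody s; lra.
have [u_lt_c|c_le_u] := ltP u c; first by apply: good_lt_sup; rewrite u0.
have -> : u = c by apply/le_anti; rewrite cu c_le_u.
exact: good_sup.
Unshelve. all: by end_near.
Qed.

Lemma mean_value_slack : `|phi 1 - phi 0| <= psi 1 - psi 0 + e.
Proof. by have := good_sup; rewrite /good sup_eq1 mulr1. Qed.

End Slack.

Lemma mean_value_ineq : `|phi 1 - phi 0| <= psi 1 - psi 0.
Proof. by apply/ler_addgt0Pr => e; exact: mean_value_slack. Qed.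

End MeanValueInequality.

Lemma norm_le_opnorm (R : realType) (U V : normedModType R) (L : {linear U -> V}) :
  continuous L -> forall u, `|L u| <= opnorm L * `|u|.
Proof.
move=> Lc u; have [k k_gt0 Lk] := linear_lipschitz Lc.
have [->|u_neq0] := eqVneq u 0; first by rewrite linear0 !normr0 mulr0.
have u_gt0 : 0 < `|u| by rewrite normr_gt0.
have L_sup : has_sup [set `|L x| | x in [set x : U | `|x| <= 1]].
  split; first by exists `|L 0|, 0 => //=; rewrite normr0 ler01.
  exists k => _ [x /= x1 <-]; apply: le_trans (Lk x) _.
  by rewrite -[leRHS]mulr1 ler_pM2l.
have : [set `|L x| | x in [set x : U | `|x| <= 1]] `|L (`|u|^-1 *: u)|.
  exists (`|u|^-1 *: u) => //=.
  by rewrite normrZ ger0_norm ?invr_ge0 // mulVf ?gt_eqF.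
move/(sup_upper_bound L_sup); rewrite -/(opnorm L) linearZ normrZ.
by rewrite ger0_norm ?invr_ge0 // -ler_pdivrMr // mulrC.
Qed.

Lemma diff_remainder_le (R : realType) (X Y : normedModType R) (F : X -> Y)
    (a v : X) (e : R) : differentiable F a -> 0 < e ->
  \forall h \near 0^'+, `|F (h *: v + a) - F a - h *: 'd F a v| <= e * h.
Proof.
move=> dF e_gt0.
have quot : (fun h : R => h^-1 *: (F (h *: v + a) - F a)) @ 0^' --> 'd F a v.
  by rewrite -deriveE //; exact: diff_derivable.
move/cvg_dnbhs_at_right/cvgrPdist_le : quot => /(_ _ e_gt0) close.
near=> h.
have h_gt0 : 0 < h by near: h; exact: nbhs_right_gt.
have -> : F (h *: v + a) - F a - h *: 'd F a v
    = - (h *: ('d F a v - h^-1 *: (F (h *: v + a) - F a))).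
  by rewrite scalerBr scalerA mulfV ?gt_eqF // scale1r opprB.
rewrite normrN normrZ gtr0_norm // mulrC ler_pM2r //.
by near: h; exact: close.
Unshelve. all: by end_near.
Qed.

Lemma cvg_at_right0_of_diff_quotient (R : realType) (f : R -> R) (l : R) :
  (fun h => h^-1 * (f h - f 0)) @ 0^'+ --> l -> f @ 0^'+ --> f 0.
Proof.
move=> quot.
have : (fun h => f 0 + h * (h^-1 * (f h - f 0))) @ 0^'+ --> f 0 + 0 * l.
  apply: cvgD; first exact: cvg_cst.
  by apply: cvgM => //; apply: cvg_at_right_filter; exact: cvg_id.
rewrite mul0r addr0; apply: cvg_trans; apply: near_eq_cvg; near=> h.
have h_gt0 : 0 < h by near: h; exact: nbhs_right_gt.
by rewrite mulrA mulfV ?gt_eqF // mul1r addrC subrK.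
Unshelve. all: by end_near.
Qed.

Section ScalarMajorant.
Variables (R : realType) (f df : R -> R) (Rad : R).
Hypothesis f_deriv : forall t, 0 < t < Rad -> is_derive t 1 f (df t).
Hypothesis f_right_deriv0 : (fun h => h^-1 * (f h - f 0)) @ 0^'+ --> df 0.
Hypothesis df_incr : forall s t, 0 <= s -> s < t -> t < Rad -> df s < df t.

Let f_cont t : 0 < t < Rad -> {for t, continuous f}.
Proof.
move=> t_in; apply: differentiable_continuous; apply/derivable1_diffP.
by have [] := f_deriv t_in.
Qed.

Let f_continuous_within p q : 0 <= p < q -> q < Rad ->
  {within `[p, q], continuous f}.
Proof.
move=> /andP[p0 pq] qR; apply/continuous_within_itvP => //; split.
- by move=> s; rewrite in_itv /= => /andP[ps sq]; apply: f_cont; lra.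
- have [->|p_neq0] := eqVneq p 0.
    exact: cvg_at_right0_of_diff_quotient f_right_deriv0.
  by apply/cvg_at_right_filter/f_cont; rewrite lt_def p_neq0 p0 /=; lra.
- by apply/cvg_at_left_filter/f_cont; lra.
Qed.

Lemma increment_ge_tangent p q : 0 <= p <= q -> q < Rad ->
  (q - p) * df p <= f q - f p.
Proof.
move=> /andP[p0 pq] qR; have [<-|p_neq_q] := eqVneq p q.
  by rewrite !subrr mul0r.
have p_lt_q : p < q by rewrite lt_def eq_sym p_neq_q.
have f_deriv_pq s : s \in `]p, q[ -> is_derive s 1 f (df s).
  by rewrite in_itv /= => /andP[ps sq]; apply: f_deriv; lra.
have pq_in : 0 <= p < q by rewrite p0.
have [s] := MVT p_lt_q f_deriv_pq (f_continuous_within pq_in qR).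
rewrite in_itv /= => /andP[ps sq] ->.
by rewrite mulrC ler_pM2r ?subr_gt0 //; apply/ltW/df_incr => //; lra.
Qed.

End ScalarMajorant.

Lemma residual_norm_bounds (R : realType) (V : normedModType R) (a b w : V) (r k : R) :
  `|a - b - w| <= r -> `|b| <= k -> `|w| - r - k <= `|a| <= r + k + `|w|.
Proof.
move=> r_ge b_le; apply/andP; split.
  have := ler_normB (a - b) (a - b - w); rewrite opprB addrC subrK.
  have := ler_normB a b; lra.
have := ler_normD (a - (b + w)) (b + w); rewrite subrK opprD addrA.
have := ler_normD b w; lra.
Qed.

Section NewtonPath.
Variables (R : realType) (X Y : normedModType R) (F : X -> Y) (Finv : Y -> X).
Variables (x0 : X) (f df : R -> R) (Rad : R).
Hypotheses (FinvK : cancel ('d F x0) Finv) (FK : cancel Finv ('d F x0)).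
Hypothesis Finv_cont : continuous Finv.
Hypothesis F_diff : forall z, `|z - x0| < Rad -> differentiable F z.
Hypothesis dF_majorant : forall z, `|z - x0| < Rad ->
  opnorm (fun w => Finv ('d F z w - 'd F x0 w)) <= df `|z - x0| - df 0.
Hypothesis f_tangent : forall p q, 0 <= p <= q -> q < Rad ->
  (q - p) * df p <= f q - f p.
Hypothesis df_ge_df0 : forall s, 0 <= s < Rad -> df 0 <= df s.

Let Finv_lin : {linear Y -> X} :=
  HB.pack Finv (GRing.isLinear.Build R Y X *:%R Finv (can2_linear FinvK FK)).

Let FinvB : {morph Finv : a b / a - b} := linearB Finv_lin.
Let FinvZ : scalable Finv := linearZZ Finv_lin.

Variable v : X.
Hypothesis v_lt : `|v| < Rad.

Let t := `|v|.
Let x s := x0 + s *: v.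
Let t_ge0 : 0 <= t. Proof. exact: normr_ge0. Qed.

Let phi s := Finv (F (x s)) - s *: v.
(* [f (s t) + s t] once [df 0 = -1]. *)
Let psi s := f (s * t) - df 0 * (s * t).

Let dist_x s : 0 <= s <= 1 -> `|x s - x0| = s * t.
Proof. by move=> /andP[s0 _]; rewrite /x addrC addKr normrZ ger0_norm. Qed.

Let dist_x_lt s : 0 <= s <= 1 -> s * t < Rad.
Proof.
move=> /andP[s0 s1]; apply: le_lt_trans v_lt.
by rewrite -[leRHS]mul1r; apply: ler_wpM2r.
Qed.

Let x0_diff : differentiable F x0.
Proof. by apply: F_diff; rewrite subrr normr0 (le_lt_trans t_ge0). Qed.

Let x_diff s : 0 <= s <= 1 -> differentiable F (x s).
Proof. by move=> s01; apply: F_diff; rewrite dist_x // dist_x_lt. Qed.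

Lemma majorant_path_nondecreasing : {in `[0, 1] &, {homo psi : a b / a <= b}}.
Proof.
move=> a b; rewrite !in_itv /= => /andP[a0 _] b01 ab.
have at_le : a * t <= b * t by apply: ler_wpM2r.
have at_in : 0 <= a * t <= b * t by rewrite mulr_ge0.
have tangent := f_tangent at_in (dist_x_lt b01).
have df_ge : df 0 <= df (a * t).
  by apply: df_ge_df0; rewrite mulr_ge0 //= (le_lt_trans at_le (dist_x_lt b01)).
have : 0 <= (b * t - a * t) * (df (a * t) - df 0) by rewrite mulr_ge0 ?subr_ge0.
rewrite /psi; nra.
Qed.

Lemma newton_path_left_cont s : 0 < s <= 1 -> phi u @[u --> s^'-] --> phi s.
Proof.
move=> /andP[s0 s1]; apply: cvg_at_left_filter; rewrite /phi.
apply: cvgB; last exact: scalel_continuous.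
have s01 : 0 <= s <= 1 by rewrite ltW.
change {for s, continuous (Finv \o (F \o x))}.
apply: continuous_comp; last exact: Finv_cont.
apply: continuous_comp; last exact/differentiable_continuous/x_diff.
by apply: cvgD; [exact: cvg_cst | exact: scalel_continuous].
Qed.

Lemma newton_path_incrementE s u : phi u - phi s =
  Finv (F ((u - s) *: v + x s) - F (x s) - (u - s) *: 'd F (x s) v)
  + (u - s) *: Finv ('d F (x s) v - 'd F x0 v).
Proof.
rewrite /phi (_ : x u = (u - s) *: v + x s); last first.
  by rewrite /x scalerBl addrCA subrK.
rewrite !FinvB !FinvZ FinvK.
move: (Finv (F _)) (Finv (F (x s))) (Finv ('d F (x s) v)) => A B D.
rewrite scalerBr addrA subrK scalerBl !opprB !addrA.
by rewrite addrAC [RHS]addrAC [X in _ = X + _]addrAC.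
Qed.

Lemma newton_drift_le s : 0 <= s <= 1 ->
  `|Finv ('d F (x s) v - 'd F x0 v)| <= (df (s * t) - df 0) * t.
Proof.
move=> s01.
pose L : {linear X -> X} := Finv_lin \o ('d F (x s) \- 'd F x0).
have L_cont : continuous L.
  move=> w; apply: continuous_comp; last exact: Finv_cont.
  by apply: continuousB; apply: diff_continuous; [exact: x_diff | exact: x0_diff].
have x_near : `|x s - x0| < Rad by rewrite dist_x // dist_x_lt.
apply: le_trans (norm_le_opnorm L_cont v) _; rewrite ler_wpM2r //.
by have := dF_majorant x_near; rewrite dist_x.
Qed.

Lemma newton_path_right_deriv_le s : 0 <= s < 1 -> forall e, 0 < e ->
  \forall u \near s^'+, `|phi u - phi s| <= psi u - psi s + e * (u - s).
Proof.
move=> /andP[s0 s1] e e_gt0; have s01 : 0 <= s <= 1 by rewrite s0 ltW.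
have [M M_gt0 FinvM] := linear_lipschitz (Finv_cont : continuous Finv_lin).
have eM_gt0 : 0 < e / M by rewrite divr_gt0.
have remainder : \forall u \near s^'+, `|F ((u - s) *: v + x s) - F (x s)
    - (u - s) *: 'd F (x s) v| <= e / M * (u - s).
  apply/nbhs_right0P; apply: filterS (diff_remainder_le v (x_diff s01) eM_gt0).
  by move=> h; rewrite (addrC s h) addrK.
near=> u.
have su : s < u by near: u; exact: nbhs_right_gt.
have u1 : u < 1 by near: u; exact: nbhs_right_lt.
have u01 : 0 <= u <= 1 by apply/andP; split; lra.
rewrite newton_path_incrementE; apply: le_trans (ler_normD _ _) _.
have remainder_u : `|Finv (F ((u - s) *: v + x s) - F (x s)
    - (u - s) *: 'd F (x s) v)| <= e * (u - s).
  apply: le_trans (FinvM _) _.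
  have -> : e * (u - s) = M * (e / M * (u - s)) by field; rewrite gt_eqF.
  by rewrite ler_pM2l //; near: u; exact: remainder.
have drift_u : `|(u - s) *: Finv ('d F (x s) v - 'd F x0 v)|
    <= (u * t - s * t) * (df (s * t) - df 0).
  rewrite normrZ gtr0_norm ?subr_gt0 // -mulrBl -mulrA [t * _]mulrC.
  by rewrite ler_pM2l ?subr_gt0 ?newton_drift_le.
have st_in : 0 <= s * t <= u * t.
  by rewrite mulr_ge0 //=; apply: ler_wpM2r => //; exact: ltW.
have tangent := f_tangent st_in (dist_x_lt u01).
rewrite /psi; move: remainder_u drift_u tangent; nra.
Unshelve. all: by end_near.
Qed.

Lemma newton_residual_le :
  `|Finv (F (x0 + v)) - Finv (F x0) - v| <= f t - f 0 - df 0 * t.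
Proof.
have := mean_value_ineq majorant_path_nondecreasing newton_path_left_cont
  newton_path_right_deriv_le.
rewrite /phi /psi /x !mul1r !mul0r scale1r scale0r addr0 subr0 mulr0 subr0.
by rewrite addrAC; lra.
Qed.

End NewtonPath.

Unset Implicit Arguments.

Theorem corollary3p5 (R : realType) (X Y : completeNormedModType R)
  (Rad : R) (C : set X) (F : X -> Y) (x0 : X) (Finv : Y -> X)
  (f df : R -> R) :
  {within C, continuous F} ->
  cont_diff_on F (interior C) ->
  interior C x0 ->
  (* F'(x0) is non-singular, with bounded inverse Finv *)
  continuous Finv ->
  (forall v : X, Finv ('d F x0 v) = v) ->
  (forall w : Y, 'd F x0 (Finv w) = w) ->
  (* f : [0,R) -> R continuously differentiable with derivative df *)
  (forall t, 0 < t < Rad -> is_derive t 1 f (df t)) ->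
  (fun h => h^-1 * (f h - f 0)) @ 0^'+ --> df 0 ->
  {within `[0, Rad[, continuous df} ->
  ball x0 Rad `<=` C ->
  (forall x y : X, `|x - x0| < Rad -> `|y - x0| < Rad ->
     `|x - x0| + `|y - x| < Rad ->
     opnorm (fun v => Finv ('d F y v - 'd F x v))
       <= df (`|y - x| + `|x - x0|) - df `|x - x0|) ->
  `|Finv (F x0)| <= f 0 ->
  (* (h1) *) 0 < f 0 -> df 0 = -1 ->
  (* (h2) f' strictly increasing and convex on [0,R) *)
  (forall s t, 0 <= s -> s < t -> t < Rad -> df s < df t) ->
  (forall s t l, 0 <= s < Rad -> 0 <= t < Rad -> 0 <= l <= 1 ->
     df (l * s + (1 - l) * t) <= l * df s + (1 - l) * df t) ->
  (* (h3) *) (exists t, 0 < t < Rad /\ f t < 0) ->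
  forall y : X, ball x0 Rad y ->
    - f `|y - x0| <= `|Finv (F y)| <= f `|y - x0| + 2 * `|y - x0|.
Proof.
move=> _ F_C1 _ Finv_cont FinvK FK f_deriv f_right_deriv0 _ ball_C dF_lip Fx0_le
  _ df0 df_incr _ _ y y_ball.
have y_near : `|y - x0| < Rad by move: y_ball; rewrite -ball_normE /= distrC.
have F_diff z : `|z - x0| < Rad -> differentiable F z.
  move=> z_near; apply: (F_C1 z _).1.
  have : ball x0 Rad `<=` interior C by rewrite -open_subsetE //; exact: ball_open.
  by apply; rewrite -ball_normE /= distrC.
have dF_majorant z : `|z - x0| < Rad ->
    opnorm (fun w => Finv ('d F z w - 'd F x0 w)) <= df `|z - x0| - df 0.
  move=> z_near; have := dF_lip x0 z; rewrite subrr normr0 addr0 add0r.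
  by apply=> //; apply: le_lt_trans y_near.
have df_ge_df0 s : 0 <= s < Rad -> df 0 <= df s.
  move=> /andP[s0 sR]; have [->|s_neq0] := eqVneq s 0; first exact: lexx.
  by apply/ltW/df_incr; rewrite // lt_def s_neq0.
have := newton_residual_le FinvK FK Finv_cont F_diff dF_majorant
  (increment_ge_tangent f_deriv f_right_deriv0 df_incr) df_ge_df0 y_near.
rewrite (addrC x0) subrK df0 mulN1r opprK => residual_le.
have := residual_norm_bounds residual_le Fx0_le; lra.
Qed.
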